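(* Let $a_2>0$ and consider the two-link parallel network with unit demand and latencies $\ell_1(x_1)=x_1$, $\ell_2(x_2)=a_2x_2$. Then every $t\in\mathcal{T}(\infty)$ equals $t=\left(\frac{2a_2+1}{3},\frac{a_2+2}{3}\right)$, and for this $t$, $$\frac{C(x(t))}{C(x^* )}=\frac{a_2^2+7a_2+1}{9a_2},$$ where $x^*$ is the optimal flow. In particular this ratio tends to $\infty$ as $a_2\to\infty$.
   Context: Flows $x\in\mathbb{R}^2_+$ with $x_1+x_2=1$; $C(x)=\sum_i\ell_i(x_i)x_i$; $x^*$ minimizes $C$. For tolls $t\in\mathbb{R}^2_+$, $x(t)$ is the unique Wardrop equilibrium for $t$ (for all $i,j$ with $x_i>0$: $\ell_i(x_i)+t_i\le\ell_j(x_j)+t_j$). Profit $\Pi_i(t)=t_ix_i(t)$. $\mathcal{T}(\infty)$: the set of toll vectors $t\in\mathbb{R}^2_+$ such that for every $i$ and every $t'_i\ge0$, $\Pi_i(t_i,t_{-i})\ge\Pi_i(t'_i,t_{-i})$ (flow recomputed). *)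

From Stdlib Require Import Reals Lra ClassicalEpsilon.
Open Scope R_scope.

Inductive link : Type := L1 | L2.

Definition link_eqb (i j : link) : bool :=
  match i, j with L1, L1 | L2, L2 => true | _, _ => false end.

Definition vec := link -> R.

Definition lat (a2 : R) (i : link) (y : R) : R :=
  match i with L1 => y | L2 => a2 * y end.

Definition feasible (x : vec) : Prop :=
  0 <= x L1 /\ 0 <= x L2 /\ x L1 + x L2 = 1.

Definition nonneg (t : vec) : Prop := 0 <= t L1 /\ 0 <= t L2.

Definition cost (a2 : R) (x : vec) : R :=
  lat a2 L1 (x L1) * x L1 + lat a2 L2 (x L2) * x L2.

Definition is_opt (a2 : R) (x : vec) : Prop :=
  feasible x /\ forall y, feasible y -> cost a2 x <= cost a2 y.

Definition wardrop (a2 : R) (t x : vec) : Prop :=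
  feasible x /\
  forall i j, 0 < x i -> lat a2 i (x i) + t i <= lat a2 j (x j) + t j.

Definition default_flow : vec := fun _ => 1/2.

(* x(t): the (unique) Wardrop equilibrium for t, selected by Hilbert's epsilon. *)
Definition eq_flow (a2 : R) (t : vec) : vec :=
  epsilon (inhabits default_flow) (wardrop a2 t).

(* x^star: the (unique) optimal flow, selected by Hilbert's epsilon. *)
Definition opt_flow (a2 : R) : vec :=
  epsilon (inhabits default_flow) (is_opt a2).

Definition profit (a2 : R) (i : link) (t : vec) : R := t i * eq_flow a2 t i.

Definition upd (t : vec) (i : link) (v : R) : vec :=
  fun j => if link_eqb i j then v else t j.

Definition Tinf (a2 : R) (t : vec) : Prop :=
  nonneg t /\
  forall i (v : R), 0 <= v -> profit a2 i t >= profit a2 i (upd t i v).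

Definition tstar (a2 : R) : vec :=
  fun i => match i with L1 => (2 * a2 + 1) / 3 | L2 => (a2 + 2) / 3 end.

Definition ratio (a2 : R) : R :=
  cost a2 (eq_flow a2 (tstar a2)) / cost a2 (opt_flow a2).

From Stdlib Require Import Reals Lra ClassicalEpsilon.
Open Scope R_scope.

(* An equilibrium splits the demand so that l1(x1) + t1 = l2(x2) + t2 as long
   as both gaps g1 := a2 + t2 - t1 and g2 := 1 + t1 - t2 are positive, which
   gives x1 = g1/(1+a2), x2 = g2/(1+a2). Operator i therefore earns
   t_i g_i/(1+a2): a concave parabola in its own toll, maximised at half the
   intercept, i.e. t1 = (a2+t2)/2 and t2 = (1+t1)/2, whose unique solution is
   the claimed toll vector. In a Nash equilibrium neither gap can vanish,
   since a link without flow earns nothing while a small undercut earns a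
   positive profit. The optimum costs a2/(1+a2), and the equilibrium cost at
   the Nash tolls is (a2^2+7a2+1)/(9(1+a2)). *)

Lemma parabola_max_at_vertex (K L t : R) :
  0 < K -> 0 <= t -> L < t < K ->
  (forall v, 0 <= v -> L < v < K -> v * (K - v) <= t * (K - t)) ->
  t = K / 2.
Proof.
  intros HK Ht [HLt HtK] Hmax.
  destruct (Rlt_or_le L (K / 2)) as [HL|HL].
  - specialize (Hmax (K / 2) ltac:(lra) ltac:(lra)). nra.
  - specialize (Hmax ((t + L) / 2) ltac:(lra) ltac:(lra)). nra.
Qed.

Section TwoLinkNetwork.

Variable a2 : R.
Hypothesis a2_pos : 0 < a2.

Lemma wardrop_exists (t : vec) : exists x, wardrop a2 t x.
Proof.
  destruct (Rle_or_lt (a2 + t L2 - t L1) 0) as [Hg1|Hg1].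
  - exists (fun i => match i with L1 => 0 | L2 => 1 end).
    split; [unfold feasible; lra|].
    intros [] [] Hi; cbn in *; lra.
  - destruct (Rle_or_lt (1 + t L1 - t L2) 0) as [Hg2|Hg2].
    + exists (fun i => match i with L1 => 1 | L2 => 0 end).
      split; [unfold feasible; lra|].
      intros [] [] Hi; cbn in *; lra.
    + set (p := (a2 + t L2 - t L1) / (1 + a2)).
      assert (Hp : p * (1 + a2) = a2 + t L2 - t L1) by (unfold p; field; lra).
      exists (fun i => match i with L1 => p | L2 => 1 - p end).
      split; [unfold feasible; cbn; nra|].
      intros [] [] Hi; cbn in *; nra.
Qed.

Lemma eq_flow_wardrop (t : vec) : wardrop a2 t (eq_flow a2 t).
Proof. unfold eq_flow; apply epsilon_spec, wardrop_exists. Qed.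

Lemma wardrop_L1_unused (t x : vec) :
  wardrop a2 t x -> a2 + t L2 - t L1 <= 0 -> x L1 = 0.
Proof.
  intros [[F1 [F2 F3]] W] Hg1.
  destruct (Rle_lt_or_eq_dec 0 (x L1) F1) as [Hx|]; [|lra].
  specialize (W L1 L2 Hx); cbn in W. nra.
Qed.

Lemma wardrop_L2_unused (t x : vec) :
  wardrop a2 t x -> 1 + t L1 - t L2 <= 0 -> x L2 = 0.
Proof.
  intros [[F1 [F2 F3]] W] Hg2.
  destruct (Rle_lt_or_eq_dec 0 (x L2) F2) as [Hx|]; [|lra].
  specialize (W L2 L1 Hx); cbn in W. nra.
Qed.

Lemma wardrop_interior (t x : vec) :
  wardrop a2 t x -> 0 < a2 + t L2 - t L1 -> 0 < 1 + t L1 - t L2 ->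
  x L1 = (a2 + t L2 - t L1) / (1 + a2) /\ x L2 = (1 + t L1 - t L2) / (1 + a2).
Proof.
  intros Hw Hg1 Hg2.
  pose proof Hw as [[F1 [F2 F3]] W].
  assert (Hx1 : 0 < x L1).
  { destruct (Rle_lt_or_eq_dec 0 (x L1) F1) as [|E]; [lra|].
    specialize (W L2 L1 ltac:(lra)); cbn in W. nra. }
  assert (Hx2 : 0 < x L2).
  { destruct (Rle_lt_or_eq_dec 0 (x L2) F2) as [|E]; [lra|].
    specialize (W L1 L2 ltac:(lra)); cbn in W. nra. }
  assert (Hbal : x L1 + t L1 = a2 * x L2 + t L2).
  { pose proof (W L1 L2 Hx1); pose proof (W L2 L1 Hx2); cbn in *; lra. }
  assert (E1 : x L1 * (1 + a2) = a2 + t L2 - t L1) by nra.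
  assert (E2 : x L2 * (1 + a2) = 1 + t L1 - t L2) by nra.
  split; [rewrite <- E1 | rewrite <- E2]; field; lra.
Qed.

Lemma profit_L1_interior (t : vec) :
  0 < a2 + t L2 - t L1 -> 0 < 1 + t L1 - t L2 ->
  profit a2 L1 t = t L1 * (a2 + t L2 - t L1) / (1 + a2).
Proof.
  intros Hg1 Hg2. unfold profit.
  rewrite (proj1 (wardrop_interior t _ (eq_flow_wardrop t) Hg1 Hg2)).
  apply Rmult_div_assoc.
Qed.

Lemma profit_L2_interior (t : vec) :
  0 < a2 + t L2 - t L1 -> 0 < 1 + t L1 - t L2 ->
  profit a2 L2 t = t L2 * (1 + t L1 - t L2) / (1 + a2).
Proof.
  intros Hg1 Hg2. unfold profit.
  rewrite (proj2 (wardrop_interior t _ (eq_flow_wardrop t) Hg1 Hg2)).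
  apply Rmult_div_assoc.
Qed.

Lemma Tinf_profit_pos (t : vec) (i : link) : Tinf a2 t -> 0 < profit a2 i t.
Proof.
  intros [[N1 N2] Nash].
  destruct i.
  -     set (v := t L2 + a2 / 2).
    apply (Rlt_le_trans _ (profit a2 L1 (upd t L1 v))).
    + rewrite profit_L1_interior; cbn; unfold v;
        [apply Rdiv_lt_0_compat; nra | lra | lra].
    + apply Rge_le, Nash. unfold v; lra.
  - set (v := t L1 + 1 / 2).
    apply (Rlt_le_trans _ (profit a2 L2 (upd t L2 v))).
    + rewrite profit_L2_interior; cbn; unfold v;
        [apply Rdiv_lt_0_compat; nra | lra | lra].
    + apply Rge_le, Nash. unfold v; lra.
Qed.

Lemma Tinf_interior (t : vec) :
  Tinf a2 t -> 0 < a2 + t L2 - t L1 /\ 0 < 1 + t L1 - t L2.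
Proof.
  intros Ht. split.
  - destruct (Rle_or_lt (a2 + t L2 - t L1) 0) as [Hg1|]; [exfalso|assumption].
    pose proof (Tinf_profit_pos t L1 Ht) as Hpos. unfold profit in Hpos.
    rewrite (wardrop_L1_unused t _ (eq_flow_wardrop t) Hg1) in Hpos. lra.
  - destruct (Rle_or_lt (1 + t L1 - t L2) 0) as [Hg2|]; [exfalso|assumption].
    pose proof (Tinf_profit_pos t L2 Ht) as Hpos. unfold profit in Hpos.
    rewrite (wardrop_L2_unused t _ (eq_flow_wardrop t) Hg2) in Hpos. lra.
Qed.

Lemma Tinf_best_response_L1 (t : vec) : Tinf a2 t -> t L1 = (a2 + t L2) / 2.
Proof.
  intros Ht.
  destruct (Tinf_interior t Ht) as [Hg1 Hg2].
  destruct Ht as [[N1 N2] Nash].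
  apply (parabola_max_at_vertex _ (t L2 - 1)); [lra | lra | lra |].
  intros v Hv Hrange.
  specialize (Nash L1 v Hv).
  rewrite !profit_L1_interior in Nash; cbn in *; try lra.
  apply Rge_le, Rmult_le_reg_r with (r := / (1 + a2)) in Nash;
    [lra | apply Rinv_0_lt_compat; lra].
Qed.

Lemma Tinf_best_response_L2 (t : vec) : Tinf a2 t -> t L2 = (1 + t L1) / 2.
Proof.
  intros Ht.
  destruct (Tinf_interior t Ht) as [Hg1 Hg2].
  destruct Ht as [[N1 N2] Nash].
  apply (parabola_max_at_vertex _ (t L1 - a2)); [lra | lra | lra |].
  intros v Hv Hrange.
  specialize (Nash L2 v Hv).
  rewrite !profit_L2_interior in Nash; cbn in *; try lra.
  apply Rge_le, Rmult_le_reg_r with (r := / (1 + a2)) in Nash;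
    [lra | apply Rinv_0_lt_compat; lra].
Qed.

Lemma Tinf_tolls (t : vec) :
  Tinf a2 t -> t L1 = (2 * a2 + 1) / 3 /\ t L2 = (a2 + 2) / 3.
Proof.
  intros Ht.
  pose proof (Tinf_best_response_L1 t Ht).
  pose proof (Tinf_best_response_L2 t Ht).
  split; lra.
Qed.

Lemma cost_ge_min (y : vec) : feasible y -> a2 / (1 + a2) <= cost a2 y.
Proof.
  intros [F1 [F2 F3]].
  assert (Hsq : cost a2 y - a2 / (1 + a2) = ((1 + a2) * y L1 - a2) ^ 2 / (1 + a2)).
  { unfold cost; cbn. replace (y L2) with (1 - y L1) by lra. field. lra. }
  assert (0 <= ((1 + a2) * y L1 - a2) ^ 2 / (1 + a2)).
  { unfold Rdiv; apply Rmult_le_pos;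
      [apply pow2_ge_0 | left; apply Rinv_0_lt_compat; lra]. }
  lra.
Qed.

Lemma opt_flow_cost : cost a2 (opt_flow a2) = a2 / (1 + a2).
Proof.
  set (p := a2 / (1 + a2)).
  set (xo := fun i => match i with L1 => p | L2 => 1 - p end).
  assert (Hp : 0 < p < 1).
  { unfold p; split; [apply Rdiv_lt_0_compat; lra|].
    apply Rmult_lt_reg_r with (1 + a2); [lra|]. field_simplify; lra. }
  assert (Fxo : feasible xo) by (unfold feasible, xo; lra).
  assert (Cxo : cost a2 xo = p) by (unfold cost, xo, p; cbn; field; lra).
  assert (Oxo : is_opt a2 xo).
  { split; [exact Fxo|]. intros y Fy. rewrite Cxo. now apply cost_ge_min. }
  assert (Oo : is_opt a2 (opt_flow a2)).
  { unfold opt_flow; apply epsilon_spec; now exists xo. }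
  destruct Oo as [Fo Mo].
  pose proof (Mo xo Fxo). pose proof (cost_ge_min _ Fo). unfold p in *. lra.
Qed.

Lemma ratio_eq : ratio a2 = (a2 ^ 2 + 7 * a2 + 1) / (9 * a2).
Proof.
  unfold ratio. rewrite opt_flow_cost.
  destruct (wardrop_interior (tstar a2) _ (eq_flow_wardrop (tstar a2)))
    as [X1 X2]; cbn; try lra.
  unfold cost; cbn. rewrite X1, X2; cbn. field. lra.
Qed.

Lemma ratio_gt : a2 / 9 < ratio a2.
Proof.
  rewrite ratio_eq.
  apply Rmult_lt_reg_r with (9 * a2); [lra|].
  field_simplify; nra.
Qed.

End TwoLinkNetwork.

Theorem mainTheorem12 :
  (forall a2 : R, 0 < a2 ->
     (forall t : vec, Tinf a2 t ->
        t L1 = (2 * a2 + 1) / 3 /\ t L2 = (a2 + 2) / 3) /\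
     ratio a2 = (a2 ^ 2 + 7 * a2 + 1) / (9 * a2)) /\
  (forall M : R, exists A : R, forall a2 : R, A < a2 -> M < ratio a2).
Proof.
  split.
  - intros a2 Ha. split.
    + exact (Tinf_tolls a2 Ha).
    + exact (ratio_eq a2 Ha).
  - intros M. exists (9 * Rabs M). intros a2 HA.
    pose proof (Rabs_pos M). pose proof (Rle_abs M).
    pose proof (ratio_gt a2 ltac:(lra)).
    lra.
Qed.
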